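(* Let $\alpha,\beta$ be positive integers and $\underline n=(n_1,\dots,n_d)$ a tuple of positive integers. Suppose the graph $\mathcal{G}^{\alpha,\beta}_{\underline n}$ contains a Hamiltonian cycle which contains two $\alpha$-sites and two $\beta$-sites whose supports are pairwise disjoint. Let $k\geq \alpha+\beta-1$ be an integer and $\underline m=(n_1,\dots,n_d,k)$. Then $\mathcal{G}^{\alpha,\beta}_{\underline m}$ contains a Hamiltonian cycle which contains two $\alpha$-sites and two $\beta$-sites whose supports are pairwise disjoint.
   Context: For a tuple $\underline n=(n_1,\dots,n_d)$, the board is $\mathcal{B}_{\underline n}=\{1,\dots,n_1\}\times\cdots\times\{1,\dots,n_d\}$. Let $\mathcal{C}^{\alpha,\beta}_d$ be the set of vectors in $\mathbb{Z}^d$ with exactly $d-2$ coordinates equal to $0$, exactly one coordinate in $\{\pm\alpha\}$ and exactly one coordinate in $\{\pm\beta\}$. The graph $\mathcal{G}^{\alpha,\beta}_{\underline n}$ has vertex set $\mathcal{B}_{\underline n}$ with $a,b$ adjacent iff $a-b\in\mathcal{C}^{\alpha,\beta}_d$. Let $(e_j)$ be the standard basis of $\mathbb{R}^d$. For a Hamiltonian cycle $(a^i)_{i\in I}$, $I=\{1,\dots,N\}$, indices mod $N$: a well-oriented $\alpha$-site is a quadruple $(a^n,a^{n+1},a^m,a^{m+1})$ with $n,m\in I$ such that for some $j$, $a^{n+1}-a^m=\pm(a^{m+1}-a^n)\in\{-\alpha e_j,\alpha e_j\}$; a non-well-oriented $\alpha$-site is a quadruple $(a^n,a^{n+1},a^{m+1},a^m)$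 such that for some $j$, $a^n-a^m=\pm(a^{m+1}-a^{n+1})\in\{-\alpha e_j,\alpha e_j\}$. An $\alpha$-site is either of these; $\beta$-sites are defined in the same way with $\beta$ in place of $\alpha$. The support of a site is the set $\{a^n,a^{n+1},a^m,a^{m+1}\}$. *)

(* Points of Z^d are represented as seq int of length d;
   a tuple n = (n_1,...,n_d) is a seq nat. *)
From mathcomp Require Import all_boot all_order all_algebra.
Set Implicit Arguments. Unset Strict Implicit. Unset Printing Implicit Defensive.
Import Order.TTheory GRing.Theory Num.Theory.
Local Open Scope ring_scope.

Definition point := seq int.

Definition vsub (a b : point) : point := [seq x.1 - x.2 | x <- zip a b].
Definition vneg (a : point) : point := [seq - x | x <- a].

(* the vector  g * e_j  in Z^d (coordinates indexed 0..d-1) *)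
Definition scal_e (d j : nat) (g : int) : point :=
  mkseq (fun i => if i == j then g else 0) d.

Definition in_board (n : seq nat) (p : point) : Prop :=
  size p = size n /\
  forall i : nat, (i < size n)%N -> 1 <= nth 0 p i <= (nth 0%N n i)%:Z.

Definition in_C (alpha beta : nat) (d : nat) (v : point) : Prop :=
  size v = d /\
  exists i j : nat, [/\ (i < d)%N, (j < d)%N, i != j,
    `|nth 0 v i| = alpha%:Z /\ `|nth 0 v j| = beta%:Z &
    forall l : nat, (l < d)%N -> l != i -> l != j -> nth 0 v l = 0].

Definition adj (alpha beta : nat) (n : seq nat) (a b : point) : Prop :=
  in_board n a /\ in_board n b /\ in_C alpha beta (size n) (vsub a b).

(* a cycle is a sequence (a^i)_{i in I}, I = {0..N-1}, indices mod N *)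
Definition pt (c : seq point) (i : nat) : point := nth [::] c (i %% size c).
Definition nxt (c : seq point) (i : nat) : nat := (i.+1 %% size c)%N.

Definition ham_cycle (alpha beta : nat) (n : seq nat) (c : seq point) : Prop :=
  [/\ (3 <= size c)%N, uniq c,
      (forall p : point, p \in c <-> in_board n p) &
      forall i : nat, (i < size c)%N -> adj alpha beta n (pt c i) (pt c (nxt c i))].

(* well-oriented g-site (a^n, a^{n+1}, a^m, a^{m+1}) *)
Definition wo_site (d : nat) (g : nat) (c : seq point) (n m : nat) : Prop :=
  exists j : nat, (j < d)%N /\
    (vsub (pt c (nxt c n)) (pt c m) = vsub (pt c (nxt c m)) (pt c n) \/
     vsub (pt c (nxt c n)) (pt c m) = vneg (vsub (pt c (nxt c m)) (pt c n))) /\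
    (vsub (pt c (nxt c n)) (pt c m) = scal_e d j (g%:Z) \/
     vsub (pt c (nxt c n)) (pt c m) = scal_e d j (- g%:Z)).

(* non-well-oriented g-site (a^n, a^{n+1}, a^{m+1}, a^m) *)
Definition nwo_site (d : nat) (g : nat) (c : seq point) (n m : nat) : Prop :=
  exists j : nat, (j < d)%N /\
    (vsub (pt c n) (pt c m) = vsub (pt c (nxt c m)) (pt c (nxt c n)) \/
     vsub (pt c n) (pt c m) = vneg (vsub (pt c (nxt c m)) (pt c (nxt c n)))) /\
    (vsub (pt c n) (pt c m) = scal_e d j (g%:Z) \/
     vsub (pt c n) (pt c m) = scal_e d j (- g%:Z)).

(* a g-site of the cycle c, given by the pair of indices (n, m) in I x I *)
Definition site (d : nat) (g : nat) (c : seq point) (s : nat * nat) : Prop :=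
  [/\ (s.1 < size c)%N, (s.2 < size c)%N &
      (wo_site d g c s.1 s.2 \/ nwo_site d g c s.1 s.2)].

Definition support (c : seq point) (s : nat * nat) : seq point :=
  [:: pt c s.1; pt c (nxt c s.1); pt c s.2; pt c (nxt c s.2)].

Definition disjoint_supp (c : seq point) (s t : nat * nat) : Prop :=
  forall p : point, p \in support c s -> p \in support c t -> False.

Definition has_good_cycle (alpha beta : nat) (n : seq nat) : Prop :=
  exists c : seq point, ham_cycle alpha beta n c /\
  exists s1 s2 s3 s4 : nat * nat,
    [/\ site (size n) alpha c s1, site (size n) alpha c s2,
        site (size n) beta c s3, site (size n) beta c s4 &
        [/\ disjoint_supp c s1 s2, disjoint_supp c s1 s3, disjoint_supp c s1 s4,
            disjoint_supp c s2 s3 & disjoint_supp c s2 s4 /\ disjoint_supp c s3 s4]].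

(** Stack k copies of a Hamiltonian cycle c of the board, one in each layer
    x_(d+1) = t, and glue them together one layer at a time.  If [X; X'; Y; Y']
    is a g-site of c (XX' and YY' are edges of c, X - Y and X' - Y' are +-g e_j)
    and the layers t', t differ by h, where {g, h} = {alpha, beta}, then the
    copies X_t', Y_t and X'_t', Y'_t are adjacent in the bigger graph, so
    trading the edges X_t'X'_t' and Y_tY'_t for these two edges merges the two
    cycles.  The first beta-site attaches layer t + alpha to layer t, the first
    alpha-site attaches layer t - beta to layer t.  Starting from layer alpha,
    the multiples j * alpha mod (alpha + beta) run through 1 .. alpha + beta - 1
    by such steps, as alpha and beta are coprime (which the existence of a
    Hamiltonian cycle forces), and the higher layers are reached by steps
    + alpha.  The second alpha- and beta-sites are never touched, so their
    copies in layers 1 and 2 are the required sites of the new cycle. *)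

From Pilot Require Import Defs.
From mathcomp Require Import all_boot all_order all_algebra.
From mathcomp Require Import zify.
Set Implicit Arguments. Unset Strict Implicit. Unset Printing Implicit Defensive.

Section CycleEdges.
Variable T : eqType.
Implicit Types (C s : seq T) (a b x y : T).

Definition cycle_edges C : seq (T * T) :=
  if C is x :: s then pairmap pair x (rcons s x) else [::].

Definition cycle_adj C a b := (a, b) \in cycle_edges C \/ (b, a) \in cycle_edges C.

Definition same_pair (a b x y : T) := (a = x /\ b = y) \/ (a = y /\ b = x).

Lemma cycle_edges_cons x s :
  cycle_edges (x :: s) = rcons (pairmap pair x s) (last x s, x).
Proof. by rewrite /= -cats1 pairmap_cat cats1. Qed.

Lemma cycle_edges_rot s t : cycle_edges (s ++ t) =i cycle_edges (t ++ s).
Proof.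
case: s => [|a s]; first by rewrite cats0.
case: t => [|b t]; first by rewrite cats0.
move=> e; rewrite !cat_cons !cycle_edges_cons !pairmap_cat !last_cat /=.
rewrite !mem_rcons !in_cons !mem_cat !in_cons.
by case: (e == _); case: (e == _); case: (e \in _); case: (e \in _).
Qed.

Lemma pairmap_rev x s :
  pairmap pair (last x s) (rev (belast x s)) =
  rev [seq (e.2, e.1) | e <- pairmap pair x s].
Proof.
elim: s x => [|y s IH] x //=.
rewrite rev_cons -cats1 pairmap_cat IH rev_cons cats1; congr rcons.
by case: s {IH} => [|z s] //=; rewrite rev_cons last_rcons.
Qed.

Lemma mem_cycle_edges_rev C a b :
  ((a, b) \in cycle_edges (rev C)) = ((b, a) \in cycle_edges C).
Proof.
case: C => [|x s] //; rewrite rev_cons -cats1 cycle_edges_rot /= -rev_cons.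
rewrite -(belast_rcons x s x) -[X in pairmap _ X _](last_rcons x s x).
rewrite pairmap_rev mem_rev; apply/mapP/idP => [[[u v] ? [-> ->]] //|].
by move=> h; exists (b, a).
Qed.

Lemma cycle_adj_sym C a b : cycle_adj C a b -> cycle_adj C b a.
Proof. by case=> ?; [right|left]. Qed.

Lemma cycle_adj_rev C a b : cycle_adj (rev C) a b <-> cycle_adj C a b.
Proof. by rewrite /cycle_adj !mem_cycle_edges_rev; tauto. Qed.

Lemma mem_cycle_edges C a b : (a, b) \in cycle_edges C -> a \in C /\ b \in C.
Proof.
have mem_pairmap z t : (a, b) \in pairmap pair z t -> a \in z :: t /\ b \in t.
  elim: t z => [|y t IH] z //=; rewrite inE => /orP[/eqP[-> ->]|/IH[]].
    by rewrite !inE !eqxx.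
  by move=> ha hb; rewrite ha orbT inE hb orbT.
case: C => [|x s] // /mem_pairmap[]; rewrite mem_rcons => ha hb; split => //.
by move: ha; rewrite !inE mem_rcons !inE; case/orP=> ->; rewrite ?orbT.
Qed.

Lemma cycle_adj_mem C a b : cycle_adj C a b -> a \in C /\ b \in C.
Proof. by case=> /mem_cycle_edges[]. Qed.

Lemma cycle_edgesP x0 C a b :
  reflect (exists2 i, i < size C & nth x0 C i = a /\ nth x0 C (i.+1 %% size C) = b)
          ((a, b) \in cycle_edges C).
Proof.
case: C => [|x s]; first by apply: ReflectF => -[].
have nth_next i : i < (size s).+1 -> nth x0 (rcons s x) i = nth x0 (x :: s) (i.+1 %% (size s).+1).
  rewrite ltnS nth_rcons => Hi; case: ltngtP Hi => // [lt _|-> _].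
    by rewrite modn_small.
  by rewrite modnn.
have nth_cur i : i < (size s).+1 -> nth x0 (x :: rcons s x) i = nth x0 (x :: s) i.
  by case: i => [|i] //= Hi; rewrite nth_rcons -ltnS Hi.
rewrite /cycle_edges; apply: (iffP idP) => [H|[i Hi [<- <-]]].
  have Hi : index (a, b) (pairmap pair x (rcons s x)) < (size s).+1.
    by rewrite -(size_rcons s x) -(size_pairmap pair x) index_mem.
  exists (index (a, b) (pairmap pair x (rcons s x))) => //.
  by move: (nth_index (x0, x0) H); rewrite (nth_pairmap x0) ?size_rcons // nth_cur // nth_next // => -[].
have := mem_nth (x0, x0) (_ : i < size (pairmap pair x (rcons s x))).
by rewrite (nth_pairmap x0) ?size_rcons // nth_cur // nth_next //; apply; rewrite size_pairmap size_rcons.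
Qed.

Lemma pairmap_split (z u v : T) t : (u, v) \in pairmap pair z t ->
  exists l r, z :: t = l ++ u :: v :: r.
Proof.
elim: t z => [|y t IH] z //=; rewrite inE => /orP[/eqP[-> ->]|/IH[l [r E]]].
  by exists [::], t.
by exists (z :: l), r; rewrite E.
Qed.

Lemma cycle_edge_wrap C x x' : (x, x') \in cycle_edges C -> x != x' ->
  exists s, perm_eq C (x' :: rcons s x) /\ cycle_edges C =i cycle_edges (x' :: rcons s x).
Proof.
case: C => [|a s0] // /pairmap_split[l [r E]] neq.
case/lastP: r E => [|r z] E.
  move: E; rewrite -rcons_cons -[l ++ _]/(l ++ [:: x] ++ [:: x']) catA cats1.
  move/rcons_inj => [E1 E2]; rewrite -E2 in neq *.
  case: l E1 => [[E3 _]|b l /= [_ ->]]; first by rewrite E3 eqxx in neq.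
  by exists l; rewrite cats1.
move: E; rewrite -rcons_cons -!rcons_cons -rcons_cat => /rcons_inj[-> _].
exists (r ++ l); rewrite -[l ++ _]cat_rcons rcons_cat -cat_cons.
by rewrite perm_catC; split => //; apply: cycle_edges_rot.
Qed.

Lemma cycle_adj_wrap s x x' a b :
  cycle_adj (x' :: rcons s x) a b <->
  [\/ (a, b) \in pairmap pair x' (rcons s x), (b, a) \in pairmap pair x' (rcons s x)
     | same_pair a b x x'].
Proof.
rewrite /cycle_adj cycle_edges_cons last_rcons !mem_rcons !in_cons /same_pair.
split => [[/orP[/eqP[-> ->]|h]|/orP[/eqP[-> ->]|h]]|[h|h|[[-> ->]|[-> ->]]]].
- by constructor 3; left.
- by constructor 1.
- by constructor 3; right.
- by constructor 2.
- by left; rewrite h orbT.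
- by right; rewrite h orbT.
- by left; rewrite eqxx.
- by right; rewrite eqxx.
Qed.

Lemma merge_directed C1 C2 u u' v v' :
  (u, u') \in cycle_edges C1 -> (v, v') \in cycle_edges C2 -> u != u' -> v != v' ->
  exists D, [/\ perm_eq D (C1 ++ C2),
   (forall a b, (a, b) \in cycle_edges D ->
      [\/ cycle_adj C1 a b, cycle_adj C2 a b, same_pair a b u v | same_pair a b u' v']),
   (forall a b, cycle_adj C1 a b -> ~ same_pair a b u u' -> cycle_adj D a b) &
   (forall a b, cycle_adj C2 a b -> ~ same_pair a b v v' -> cycle_adj D a b)].
Proof.
move=> H1 H2 n1 n2.
have [s1 [P1 E1]] := cycle_edge_wrap H1 n1; have [s2 [P2 E2]] := cycle_edge_wrap H2 n2.
exists ((u' :: rcons s1 u) ++ rev (v' :: rcons s2 v)).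
set p1 := pairmap pair u' (rcons s1 u); set p2 := pairmap pair v' (rcons s2 v).
have ED e : e \in cycle_edges ((u' :: rcons s1 u) ++ rev (v' :: rcons s2 v)) =
   [|| e \in p1, e == (u, v), (e.2, e.1) \in p2 | e == (v', u')].
  rewrite rev_cons rev_rcons cat_cons cycle_edges_cons pairmap_cat last_cat !last_rcons /=.
  rewrite mem_rcons in_cons mem_cat in_cons.
  have -> : rcons (rev s2) v' = rev (belast v' (rcons s2 v)).
    by rewrite belast_rcons rev_cons.
  rewrite -[X in pairmap _ X (rev _)](last_rcons v' s2 v) pairmap_rev mem_rev.
  have -> : (e \in [seq (f.2, f.1) | f <- p2]) = ((e.2, e.1) \in p2).
    by apply/mapP/idP => [[[? ?] ? ->]|h] //; exists (e.2, e.1); case: e h.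
  by case: (e == _); case: (e == _); case: (e \in _); case: (_ \in p2).
have EC1 a b : cycle_adj C1 a b <-> [\/ (a, b) \in p1, (b, a) \in p1 | same_pair a b u u'].
  by apply: iff_trans (cycle_adj_wrap s1 u u' a b); rewrite /cycle_adj !E1.
have EC2 a b : cycle_adj C2 a b <-> [\/ (a, b) \in p2, (b, a) \in p2 | same_pair a b v v'].
  by apply: iff_trans (cycle_adj_wrap s2 v v' a b); rewrite /cycle_adj !E2.
split.
- by apply: perm_cat; rewrite ?perm_rev perm_sym.
- move=> a b; rewrite ED => /or4P[h|/eqP[-> ->]|h|/eqP[-> ->]].
  + by constructor 1; apply/EC1; constructor 1.
  + by constructor 3; left.
  + by constructor 2; apply/EC2; constructor 2.
  + by constructor 4; right.
- by move=> a b /EC1[h|h|//] ns; [left|right]; rewrite ED h.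
- by move=> a b /EC2[h|h|//] ns; [right|left]; rewrite ED /= h !orbT.
Qed.

Lemma cycle_adj_orient C x y : cycle_adj C x y ->
  exists2 C', perm_eq C' C /\ (forall a b, cycle_adj C' a b <-> cycle_adj C a b)
            & (x, y) \in cycle_edges C'.
Proof.
case=> [h|h]; first by exists C.
by exists (rev C); [rewrite perm_rev; split => // a b; apply: cycle_adj_rev
                  | rewrite mem_cycle_edges_rev].
Qed.

Lemma merge_cycles C1 C2 x x' y y' :
  cycle_adj C1 x x' -> cycle_adj C2 y y' -> x != x' -> y != y' ->
  exists D, [/\ perm_eq D (C1 ++ C2),
   (forall a b, (a, b) \in cycle_edges D ->
      [\/ cycle_adj C1 a b, cycle_adj C2 a b, same_pair a b x y | same_pair a b x' y']),
   (forall a b, cycle_adj C1 a b -> ~ same_pair a b x x' -> cycle_adj D a b) &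
   (forall a b, cycle_adj C2 a b -> ~ same_pair a b y y' -> cycle_adj D a b)].
Proof.
move=> /cycle_adj_orient[C1' [P1 E1] H1] /cycle_adj_orient[C2' [P2 E2] H2] n1 n2.
have [D [PD ED K1 K2]] := merge_directed H1 H2 n1 n2.
exists D; split.
- by rewrite (permPl PD) perm_cat.
- by move=> a b /ED[/E1|/E2||]; constructor.
- by move=> a b /E1; apply: K1.
- by move=> a b /E2; apply: K2.
Qed.

End CycleEdges.

Lemma cycle_edges_map (T U : eqType) (f : T -> U) (C : seq T) :
  cycle_edges (map f C) = [seq (f e.1, f e.2) | e <- cycle_edges C].
Proof.
have E (x : T) s : pairmap pair (f x) (map f s) =
             [seq (f e.1, f e.2) | e <- pairmap pair x s].
  by elim: s x => [|y s IH] x //=; rewrite IH.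
by case: C => [|x s] //=; rewrite -E map_rcons.
Qed.

Lemma cycle_adj_map (T U : eqType) (f : T -> U) (C : seq T) u v :
  cycle_adj C u v -> cycle_adj (map f C) (f u) (f v).
Proof.
by rewrite /cycle_adj cycle_edges_map => -[] H; [left|right];
  apply: (map_f (fun e => (f e.1, f e.2)) H).
Qed.

Section MultiplesMod.
Variables al be : nat.
Hypotheses (al_gt0 : 0 < al) (be_gt0 : 0 < be) (co_al_be : coprime al be).

Definition mulmod j := (j * al) %% (al + be).

Lemma coprime_sum_l : coprime (al + be) al.
Proof. by rewrite /coprime gcdnC gcdnDl. Qed.

Lemma mulmod_lt j : mulmod j < al + be.
Proof. by rewrite ltn_pmod // addn_gt0 al_gt0. Qed.

Lemma mulmod_gt0 j : 0 < j < al + be -> 0 < mulmod j.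
Proof.
move=> /andP[j0 jM]; rewrite lt0n; apply/negP => /eqP H.
have : (al + be) %| j * al by rewrite /dvdn -/(mulmod j) H.
by rewrite Gauss_dvdl ?coprime_sum_l // => /(dvdn_leq j0); lia.
Qed.

Lemma mulmod_inj i j :
  0 < i < al + be -> 0 < j < al + be -> mulmod i = mulmod j -> i = j.
Proof.
wlog le_ij : i j / i <= j.
  move=> W Hi Hj E; case: (leqP i j) => H; first exact: W.
  by apply/esym/W => //; rewrite ltnW.
move=> /andP[i0 iM] /andP[j0 jM] /eqP E.
have : (al + be) %| (j - i) * al.
  by rewrite mulnBl -eqn_mod_dvd ?leq_mul2r ?le_ij ?orbT // eq_sym.
rewrite Gauss_dvdl ?coprime_sum_l // {E}; case: (posnP (j - i)) => [H _|H /(dvdn_leq H)]; lia.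
Qed.

Lemma mulmodS j : mulmod j.+1 = if mulmod j + al < al + be then mulmod j + al else mulmod j - be.
Proof.
have lt := mulmod_lt j.
rewrite /mulmod mulSn -modnDmr addnC -/(mulmod j).
case: ifP => H; first by rewrite modn_small.
have -> : mulmod j + al = (mulmod j - be) + (al + be) by lia.
by rewrite modnDr modn_small //; lia.
Qed.

Lemma mulmod_onto t : 0 < t < al + be -> exists2 j, 0 < j < al + be & mulmod j = t.
Proof.
set r := iota 1 (al + be - 1).
have memr i : (i \in r) = (0 < i < al + be) by rewrite mem_iota; lia.
have sub : {subset map mulmod r <= r}.
  by move=> x /mapP[j]; rewrite !memr => Hj ->; rewrite mulmod_gt0 ?mulmod_lt.
have uniq_map : uniq (map mulmod r).
  by rewrite map_inj_in_uniq ?iota_uniq // => i j; rewrite !memr; apply: mulmod_inj.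
have [_ /(_ t)] := uniq_min_size uniq_map sub (eq_leq (esym (size_map _ _))).
by rewrite memr => <- /mapP[j]; rewrite memr => Hj ->; exists j.
Qed.

(* The residues j * al mod (al + be), 0 < j < al + be, enumerate
   1 .. al + be - 1, and consecutive ones differ by + al or - be. *)
Lemma add_sub_closed_all (P : nat -> Prop) k :
  al + be - 1 <= k -> P al ->
  (forall t, P t -> t + al <= k -> P (t + al)) ->
  (forall t, P t -> be < t -> P (t - be)) ->
  forall t, 0 < t <= k -> P t.
Proof.
move=> Hk Pal Padd Psub.
have Pmul j : 0 < j < al + be -> P (mulmod j).
  elim: j => [//|[|j] IH Hj]; first by rewrite /mulmod mul1n modn_small //; lia.
  have Pj := IH (ltac:(lia)); have pos := mulmod_gt0 Hj.
  move: pos; rewrite mulmodS; case: ifP => H pos.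
    by apply: Padd => //; lia.
  by apply: Psub => //; lia.
elim/ltn_ind => t IH Ht.
case: (ltnP t (al + be)) => [lt|ge].
  by have [j Hj <-] := mulmod_onto (ltac:(lia) : 0 < t < al + be); apply: Pmul.
have -> : t = t - al + al by lia.
by apply: Padd; [apply: IH|]; lia.
Qed.
End MultiplesMod.

Import Order.TTheory GRing.Theory Num.Theory.
Local Open Scope ring_scope.

Definition axial (d g j : nat) (v : point) := v = scal_e d j g%:Z \/ v = scal_e d j (- g%:Z).

Definition layer_pt (t : nat) (q : point) : point := rcons q t%:Z.

Lemma nth_vsub a b l : size a = size b -> (l < size a)%N ->
  nth 0 (vsub a b) l = nth 0 a l - nth 0 b l.
Proof. by move=> E H; rewrite (nth_map (0, 0)) ?size_zip ?E ?minnn -?E // nth_zip. Qed.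

Lemma vsub_rcons a b x y : size a = size b ->
  vsub (rcons a x) (rcons b y) = rcons (vsub a b) (x - y).
Proof. by move=> E; rewrite /vsub zip_rcons // map_rcons. Qed.

Lemma vsubC a b : vsub b a = vneg (vsub a b).
Proof. by elim: a b => [|x a IH] [|y b] //=; rewrite /vsub /= in IH *; rewrite IH opprB. Qed.

Lemma vnegK : involutive vneg.
Proof. by move=> v; rewrite /vneg -map_comp map_id_in // => x _ /=; rewrite opprK. Qed.

Lemma nth_vneg v l : nth 0 (vneg v) l = - nth 0 v l.
Proof.
case: (ltnP l (size v)) => H; first by rewrite (nth_map 0).
by rewrite !nth_default ?size_map // oppr0.
Qed.

Lemma nth_scal d j g l : (l < d)%N -> nth 0 (scal_e d j g) l = if l == j then g else 0.
Proof. exact: nth_mkseq. Qed.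

Lemma vneg_scal d j g : vneg (scal_e d j g) = scal_e d j (- g).
Proof. by rewrite /vneg -map_comp; apply: eq_map => i /=; case: (i == j); rewrite ?oppr0. Qed.

Lemma scal_rcons d j g : (j < d)%N -> scal_e d.+1 j g = rcons (scal_e d j g) 0.
Proof. by move=> H; rewrite /scal_e mkseqS; case: eqVneq H => // ->; rewrite ltnn. Qed.

Lemma axial_vneg d g j v : axial d g j v -> axial d g j (vneg v).
Proof. by case=> ->; rewrite vneg_scal ?opprK; [right|left]. Qed.

Lemma axial_pm d g j X Y : axial d g j X -> X = Y \/ X = vneg Y -> axial d g j Y.
Proof. by move=> H [<-|E] //; rewrite -(vnegK Y) -E; apply: axial_vneg. Qed.

Lemma axial_pm_eq d g j X Y : axial d g j X -> axial d g j Y -> X = Y \/ X = vneg Y.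
Proof. by case=> ->; case=> ->; rewrite vneg_scal ?opprK; auto. Qed.

Lemma axial_layer d g j P Q t : size P = d -> size Q = d -> (j < d)%N ->
  axial d g j (vsub P Q) -> axial d.+1 g j (vsub (layer_pt t P) (layer_pt t Q)).
Proof.
move=> HP HQ Hj; rewrite /axial /layer_pt vsub_rcons ?HP ?HQ // subrr !scal_rcons //.
by case=> ->; [left|right].
Qed.

Lemma in_C_vneg al be d v : in_C al be d v -> in_C al be d (vneg v).
Proof.
case=> Hs [i [j [Hi Hj Hij [Ha Hb] Hl]]]; split; first by rewrite size_map.
exists i, j; split => //; first by rewrite !nth_vneg !normrN.
by move=> l H1 H2 H3; rewrite nth_vneg Hl // oppr0.
Qed.

Lemma in_C_not_scal al be d v j g : (0 < al)%N -> (0 < be)%N ->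
  in_C al be d v -> v <> scal_e d j g.
Proof.
move=> al0 be0 [_ [i [i' [Hi Hi' Hii' [Ni Ni'] _]]]] E; subst v.
move: Ni Ni' Hii'; rewrite !nth_scal //.
by case: eqP => [->|_]; case: eqP => [->|_]; rewrite ?eqxx ?normr0 //; lia.
Qed.

Lemma adj_sym al be n a b : adj al be n a b -> adj al be n b a.
Proof. by case=> Ha [Hb HC]; do 2!split => //; rewrite vsubC; apply: in_C_vneg. Qed.

Lemma adj_neq al be n a b : (0 < al)%N -> adj al be n a b -> a != b.
Proof.
move=> al0 [[Ha _] [_ [_ [i [_ [Hi _ _ [Ni _] _]]]]]]; apply: contra_eqN Ni => /eqP <-.
by rewrite nth_vsub ?Ha // subrr normr0; lia.
Qed.

Lemma layer_pt_inj t t' q q' : layer_pt t q = layer_pt t' q' -> t = t' /\ q = q'.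
Proof. by move/rcons_inj => [-> [->]]. Qed.

Lemma in_board_layer n k t q : in_board n q -> (0 < t <= k)%N ->
  in_board (rcons n k) (layer_pt t q).
Proof.
move=> [Hs Hq] /andP[t1 tk]; split; first by rewrite !size_rcons Hs.
move=> i; rewrite size_rcons ltnS leq_eqVlt => /orP[/eqP ->|Hi].
  by rewrite !nth_rcons -Hs !ltnn !eqxx !lez_nat t1 tk.
by rewrite /layer_pt !nth_rcons Hs Hi Hq.
Qed.

Lemma in_board_rcons n k p : in_board (rcons n k) p ->
  exists t q, [/\ (0 < t <= k)%N, in_board n q & p = layer_pt t q].
Proof.
case/lastP: p => [[]|q z [Hs Hp]]; first by rewrite size_rcons.
move: Hs; rewrite !size_rcons => -[Hs].
have := Hp (size n); rewrite size_rcons ltnSn !nth_rcons -Hs !ltnn !eqxx => /(_ isT).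
case: z Hp => // t Hp; rewrite lez_nat => Ht; exists t, q; split => //.
split => // i Hi; have := Hp i; by rewrite size_rcons ltnS ltnW // !nth_rcons Hs Hi; apply.
Qed.

Lemma adj_layer al be n k t a b : (0 < t <= k)%N -> adj al be n a b ->
  adj al be (rcons n k) (layer_pt t a) (layer_pt t b).
Proof.
move=> Ht [Ha [Hb [Hs [i [j [Hi Hj Hij Hv Hl]]]]]].
split; first exact: in_board_layer.
split; first exact: in_board_layer.
have Esz : size a = size b by case: Ha => ->; case: Hb => ->.
rewrite /layer_pt vsub_rcons // subrr; split; first by rewrite !size_rcons Hs.
exists i, j; rewrite size_rcons; split => //; try exact: ltnW.
  by rewrite !nth_rcons Hs Hi Hj.
move=> l; rewrite ltnS leq_eqVlt => /orP[/eqP ->|Hl'] li lj.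
  by rewrite nth_rcons Hs ltnn eqxx.
by rewrite nth_rcons Hs Hl' Hl.
Qed.

Lemma in_C_rcons_scal al be g h d j (s r : int) :
  (g = al /\ h = be) \/ (g = be /\ h = al) -> (j < d)%N ->
  `|s| = g%:Z -> `|r| = h%:Z -> in_C al be d.+1 (rcons (scal_e d j s) r).
Proof.
move=> gh jd Hs Hr; split; first by rewrite size_rcons size_mkseq.
have nj : nth 0 (rcons (scal_e d j s) r) j = s by rewrite nth_rcons size_mkseq jd nth_scal // eqxx.
have nd : nth 0 (rcons (scal_e d j s) r) d = r by rewrite nth_rcons size_mkseq ltnn eqxx.
have jd' : j != d by rewrite neq_ltn jd.
have nl l : (l < d.+1)%N -> l != j -> l != d -> nth 0 (rcons (scal_e d j s) r) l = 0.
  move=> l1 lj ld; have ld' : (l < d)%N by rewrite ltn_neqAle ld -ltnS.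
  by rewrite nth_rcons size_mkseq ld' nth_scal // (negbTE lj).
have jd1 : (j < d.+1)%N := ltnW jd.
case: gh => [[? ?]|[? ?]]; subst.
  by exists j, d; split; rewrite ?nj ?nd // => l l1 lj ld; apply: nl.
by exists d, j; split; rewrite 1?eq_sym ?nj ?nd // => l l1 ld lj; apply: nl.
Qed.

Lemma adj_cross al be n k g h j P Q t t' :
  (g = al /\ h = be) \/ (g = be /\ h = al) ->
  in_board n P -> in_board n Q -> (j < size n)%N -> axial (size n) g j (vsub P Q) ->
  (0 < t <= k)%N -> (0 < t' <= k)%N -> `|t%:Z - t'%:Z| = h%:Z ->
  adj al be (rcons n k) (layer_pt t P) (layer_pt t' Q).
Proof.
move=> gh HP HQ Hj HPQ Ht Ht' Htt'.
split; first exact: in_board_layer.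
split; first exact: in_board_layer.
have Esz : size P = size Q by case: HP => ->; case: HQ => ->.
rewrite /layer_pt vsub_rcons // size_rcons.
by case: HPQ => ->; apply: (in_C_rcons_scal gh); rewrite ?normrN.
Qed.

Lemma dvdz_of_norm (g a : nat) (v : int) : (g %| a)%N -> `|v| = a%:Z -> (g%:Z %| v)%Z.
Proof.
move=> ga Hv; rewrite dvdzE /=.
have : (absz v)%:Z = a%:Z by rewrite abszE Hv.
by case=> ->.
Qed.

Lemma adj_dvd_gcd al be n a b l : adj al be n a b -> (l < size n)%N ->
  ((gcdn al be)%:Z %| nth 0 a l - nth 0 b l)%Z.
Proof.
move=> [[Ha _] [[Hb _] [Hs [i [j [Hi Hj Hij [Ni Nj] Nl]]]]]] Hl.
rewrite -nth_vsub ?Ha ?Hb //.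
case: (eqVneq l i) => [->|li]; first exact: dvdz_of_norm (dvdn_gcdl _ _) Ni.
case: (eqVneq l j) => [->|lj]; first exact: dvdz_of_norm (dvdn_gcdr _ _) Nj.
by rewrite Nl // dvdz0.
Qed.

Lemma ham_cycle_dvd_gcd al be n c p q l : ham_cycle al be n c ->
  in_board n p -> in_board n q -> (l < size n)%N ->
  ((gcdn al be)%:Z %| nth 0 p l - nth 0 q l)%Z.
Proof.
move=> [Hs _ Hb Ha] /Hb Hp /Hb Hq Hl.
have c0 : (0 < size c)%N by apply: leq_trans Hs.
have walk i : (i < size c)%N -> ((gcdn al be)%:Z %| nth 0 (pt c i) l - nth 0 (pt c 0) l)%Z.
  elim: i => [|i IH] Hi; first by rewrite subrr dvdz0.
  have := rpredB (IH (ltnW Hi)) (adj_dvd_gcd (Ha i (ltnW Hi)) Hl).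
  by rewrite /nxt modn_small // opprB addrC subrKA.
have ptE r : r \in c -> r = pt c (index r c) by move=> Hr; rewrite /pt modn_small ?index_mem ?nth_index.
have := rpredB (walk _ (_ : index p c < size c)%N) (walk _ (_ : index q c < size c)%N).
by rewrite -(ptE p) // -(ptE q) // opprB subrKA; apply; rewrite index_mem.
Qed.

Lemma in_board_ones n p : (forall l, l < size n -> nth 0 n l <= 1)%N ->
  in_board n p -> p = nseq (size n) 1.
Proof.
move=> n1 [Hs Hp]; apply: (@eq_from_nth _ 0); rewrite ?size_nseq // => l Hl.
rewrite nth_nseq -Hs Hl; move: (Hp l) (n1 l); rewrite -Hs => /(_ Hl)/andP[p1 pn] /(_ Hl).
by rewrite -lez_nat => /(le_trans pn) pn'; apply/eqP; rewrite eq_le p1 pn'.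
Qed.

(* Along the cycle every coordinate moves by multiples of gcdn al be, and unless
   the board is a single point it has two points differing by 1 in some coordinate. *)
Lemma coprime_of_ham al be n c : all (fun x => 0 < x)%N n ->
  ham_cycle al be n c -> coprime al be.
Proof.
move=> /all_nthP npos ham; set o : point := nseq (size n) 1.
have o_board : in_board n o.
  split=> [|l Hl]; first by rewrite size_nseq.
  by rewrite nth_nseq Hl lexx lez_nat npos.
case: (boolP (has (fun x => 1 < x)%N n)) => [/hasP[x xn x1]|/hasPn small].
  set l := index x n; have Hl : (l < size n)%N by rewrite index_mem.
  have o'_board : in_board n (set_nth 0 o l 2).
    split=> [|i Hi]; first by rewrite size_set_nth size_nseq maxnC (maxn_idPl Hl).
    rewrite nth_set_nth /= nth_nseq Hi; case: eqP => [->|_]; last by rewrite lexx lez_nat npos.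
    by rewrite nth_index // lez_nat.
  have := ham_cycle_dvd_gcd ham o'_board o_board Hl.
  by rewrite nth_set_nth /= eqxx nth_nseq Hl dvdzE /= dvdn1.
case: ham => Hs Hu Hb _; exfalso.
have one : (forall l, l < size n -> nth 0 n l <= 1)%N.
  by move=> l Hl; rewrite leqNgt; apply: small; apply: mem_nth.
case: c Hs Hu Hb => [|a [|b s]] // _ /andP[ab _] Hb.
have [Ea Eb] : a = o /\ b = o.
  by split; apply: in_board_ones one _; apply/Hb; rewrite !inE eqxx ?orbT.
by rewrite Ea Eb inE eqxx in ab.
Qed.

(* The g-site of Defs given by its points, orientation forgotten: a
   well-oriented site (a^n, a^n+1, a^m, a^m+1) becomes [:: a^n+1; a^n; a^m; a^m+1],
   a non-well-oriented one [:: a^n; a^n+1; a^m; a^m+1]. *)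
Definition site_quad (C : seq point) (d g : nat) (X : seq point) : Prop :=
  if X is [:: P; P'; Q; Q'] then
    [/\ cycle_adj C P P', cycle_adj C Q Q' &
        exists2 j, (j < d)%N & axial d g j (vsub P Q) /\ axial d g j (vsub P' Q')]
  else False.

Lemma site_quad_flip C d g P P' Q Q' :
  site_quad C d g [:: P; P'; Q; Q'] -> site_quad C d g [:: P'; P; Q'; Q].
Proof. by case=> /cycle_adj_sym U1 /cycle_adj_sym U2 [j Hj [G1 G2]]; split => //; exists j. Qed.

Lemma site_quadC C d g P P' Q Q' :
  site_quad C d g [:: P; P'; Q; Q'] -> site_quad C d g [:: Q; Q'; P; P'].
Proof.
by case=> U1 U2 [j Hj [G1 G2]]; split => //; exists j; rewrite // (vsubC P) (vsubC P'); split; apply: axial_vneg.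
Qed.

Lemma pt_cycle_edge (C : seq point) i : (i < size C)%N ->
  (pt C i, pt C (nxt C i)) \in cycle_edges C.
Proof. by move=> Hi; apply/(cycle_edgesP [::]); exists i; rewrite // /pt /nxt modn_mod modn_small. Qed.

Lemma cycle_edge_pt (C : seq point) a b : (a, b) \in cycle_edges C ->
  exists2 i, (i < size C)%N & pt C i = a /\ pt C (nxt C i) = b.
Proof. by case/(cycle_edgesP [::]) => i Hi [<- <-]; exists i; rewrite // /pt /nxt modn_mod modn_small. Qed.

Lemma site_quad_of_site d g C s : site d g C s ->
  exists2 X, site_quad C d g X & Defs.support C s =i X.
Proof.
case: s => i m [/= Hi Hm [[j [Hj [E1 E2]]]|[j [Hj [E1 E2]]]]].
- exists [:: pt C (nxt C i); pt C i; pt C m; pt C (nxt C m)].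
    split; [right; exact: pt_cycle_edge | left; exact: pt_cycle_edge |].
    exists j => //; split; first exact: E2.
    by rewrite vsubC; apply/axial_vneg/(axial_pm E2 E1).
  by move=> z; rewrite !inE; case: (z == _); case: (z == _).
- exists [:: pt C i; pt C (nxt C i); pt C m; pt C (nxt C m)] => //.
  split; [left; exact: pt_cycle_edge | left; exact: pt_cycle_edge |].
  exists j => //; split; first exact: E2.
  by rewrite vsubC; apply/axial_vneg/(axial_pm E2 E1).
Qed.

Lemma site_of_site_quad d g C X : site_quad C d g X ->
  exists2 s, site d g C s & Defs.support C s =i X.
Proof.
case: X => [|P [|P' [|Q [|Q' []]]]] //.
wlog PP' : P P' Q Q' / (P, P') \in cycle_edges C.
  move=> W H; have [[h|h] _ _] := H; first exact: W.
  have [s Hs E] := W _ _ _ _ h (site_quad_flip H).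
  by exists s => // z; rewrite E !inE; do 4!case: (z == _).
case=> _ [QQ'|Q'Q] [j Hj [G1 G2]].
- have [i Hi [Ei Ei']] := cycle_edge_pt PP'; have [m Hm [Em Em']] := cycle_edge_pt QQ'.
  exists (i, m); rewrite /Defs.support /= ?Ei ?Ei' ?Em ?Em' //.
  split => //; right; exists j; rewrite /= Ei Ei' Em Em'; split => //.
  by split; last exact: G1; apply: axial_pm_eq G1 _; rewrite vsubC; apply: axial_vneg.
- have [i Hi [Ei Ei']] := cycle_edge_pt PP'; have [m Hm [Em Em']] := cycle_edge_pt Q'Q.
  exists (i, m); last by move=> z; rewrite /Defs.support /= Ei Ei' Em Em' !inE; do 4!case: (z == _).
  split => //; left; exists j; rewrite /= Ei Ei' Em Em'; split => //.
  by split; last exact: G2; apply: axial_pm_eq G2 _; rewrite vsubC; apply: axial_vneg.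
Qed.

Definition apart (X Y : seq point) := ~~ has (mem X) Y.

Lemma apartP X Y : reflect (forall p, p \in X -> p \in Y -> False) (apart X Y).
Proof.
apply: (iffP hasPn) => H p; first by move=> pX /H /negP; apply.
by move=> pY; apply/negP => /H; apply.
Qed.

Lemma disjoint_suppE C s t X Y : Defs.support C s =i X -> Defs.support C t =i Y ->
  disjoint_supp C s t <-> apart X Y.
Proof.
move=> Es Et; rewrite /disjoint_supp; split => [H|/apartP H].
  by apply/apartP => p; rewrite -Es -Et; apply: H.
by move=> p; rewrite Es Et; apply: H.
Qed.

Definition good_sites (C : seq point) (d al be : nat) :=
  exists X1 X2 X3 X4, [/\ site_quad C d al X1, site_quad C d al X2,
    site_quad C d be X3, site_quad C d be X4 & pairwise apart [:: X1; X2; X3; X4]].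

Lemma good_cycleP al be n :
  has_good_cycle al be n <-> exists2 D, ham_cycle al be n D & good_sites D (size n) al be.
Proof.
split => [[D [HD [s1 [s2 [s3 [s4 [S1 S2 S3 S4 [D12 D13 D14 D23 [D24 D34]]]]]]]]]|].
  have [X1 Q1 E1] := site_quad_of_site S1; have [X2 Q2 E2] := site_quad_of_site S2.
  have [X3 Q3 E3] := site_quad_of_site S3; have [X4 Q4 E4] := site_quad_of_site S4.
  exists D => //; exists X1, X2, X3, X4; split => //=.
  rewrite !andbT; do !(apply/andP; split).
  - exact/(disjoint_suppE E1 E2).
  - exact/(disjoint_suppE E1 E3).
  - exact/(disjoint_suppE E1 E4).
  - exact/(disjoint_suppE E2 E3).
  - exact/(disjoint_suppE E2 E4).
  - exact/(disjoint_suppE E3 E4).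
case=> D HD [X1 [X2 [X3 [X4 [Q1 Q2 Q3 Q4]]]]].
have [s1 S1 E1] := site_of_site_quad Q1; have [s2 S2 E2] := site_of_site_quad Q2.
have [s3 S3 E3] := site_of_site_quad Q3; have [s4 S4 E4] := site_of_site_quad Q4.
rewrite /= !andbT => /and3P[/and3P[A12 A13 A14] /andP[A23 A24] A34].
exists D; split => //; exists s1, s2, s3, s4; split => //.
by do !split; apply/disjoint_suppE; eassumption.
Qed.

Lemma cycle_adj_adj al be n (D : seq point) a b :
  (forall a b, (a, b) \in cycle_edges D -> adj al be n a b) ->
  cycle_adj D a b -> adj al be n a b.
Proof. by move=> H [/H|/H/adj_sym]. Qed.

Lemma apart_layer X Y t t' : (t != t') || apart X Y ->
  apart (map (layer_pt t) X) (map (layer_pt t') Y).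
Proof.
move=> H; apply/apartP => _ /mapP[p pX ->] /mapP[q qY /layer_pt_inj[E1 E2]].
by case/orP: H => [/eqP//|/apartP H]; apply: (H p); rewrite // E2.
Qed.

Lemma notin_same_pair (T : eqType) (A : seq T) u v x x' :
  u \notin A -> x \in A -> x' \in A -> ~ same_pair u v x x'.
Proof. by move=> uA xA x'A [[E _]|[E _]]; rewrite E ?xA ?x'A in uA. Qed.

Lemma apart_sym X Y : apart X Y -> apart Y X.
Proof. by move=> /apartP H; apply/apartP => p pY pX; apply: (H p). Qed.

Lemma apart_notin X Y p : apart X Y -> p \in X -> p \notin Y.
Proof. by move=> /apartP H pX; apply/negP; apply: H. Qed.

Lemma apart_same_pair X Y P P' Q Q' : apart X Y -> P \in X -> Q \in Y -> Q' \in Y ->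
  ~ same_pair P P' Q Q'.
Proof. by move=> XY /(apart_notin XY); apply: notin_same_pair. Qed.

Lemma same_pair_layer t t' u v x x' :
  same_pair (layer_pt t u) (layer_pt t v) (layer_pt t' x) (layer_pt t' x') ->
  t = t' /\ same_pair u v x x'.
Proof.
case=> [[E1 E2]|[E1 E2]]; have [-> ->] := layer_pt_inj E1; have [_ ->] := layer_pt_inj E2.
  by split => //; left.
by split => //; right.
Qed.

Section Stacking.
Variables (al be : nat) (n : seq nat) (k : nat) (c : seq point).
Variables (PA PA' QA QA' PB PB' QB QB' : point).
Hypotheses (al_gt0 : (0 < al)%N) (be_gt0 : (0 < be)%N) (co_al_be : coprime al be).
Hypothesis k_ge : (al + be - 1 <= k)%N.
Hypothesis ham_c : ham_cycle al be n c.
Hypothesis siteA : site_quad c (size n) al [:: PA; PA'; QA; QA'].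
Hypothesis siteB : site_quad c (size n) be [:: PB; PB'; QB; QB'].
Hypothesis apartAB : apart [:: PA; PA'; QA; QA'] [:: PB; PB'; QB; QB'].

Definition hinge := [:: PA; PA'; QA; QA'] ++ [:: PB; PB'; QB; QB'].

Definition layer t := map (layer_pt t) c.

Lemma uniq_c : uniq c.
Proof. by case: ham_c. Qed.

Lemma uniq_layer t : uniq (layer t).
Proof. by rewrite map_inj_uniq ?uniq_c // => q q' /layer_pt_inj[]. Qed.

Lemma mem_c p : p \in c <-> in_board n p.
Proof. by case: ham_c. Qed.

Lemma size_c q : q \in c -> size q = size n.
Proof. by case/mem_c. Qed.

Lemma adj_c u v : cycle_adj c u v -> adj al be n u v.
Proof.
case: ham_c => _ _ _ Hadj.
by case=> /cycle_edge_pt[i Hi [<- <-]]; [|apply: adj_sym]; apply: Hadj.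
Qed.

Lemma site_quad_edges g P P' Q Q' : (0 < g)%N ->
  site_quad c (size n) g [:: P; P'; Q; Q'] -> ~ same_pair P P' Q Q'.
Proof.
move=> g0 [U1 U2 [j Hj [G1 G2]]] [[EP EP']|[EP EP']]; subst Q.
  have Hj' : (j < size P)%N by rewrite (size_c (cycle_adj_mem U1).1).
  have : nth 0 (vsub P P) j = 0 by rewrite nth_vsub // subrr.
  by case: G1 => ->; rewrite nth_scal // eqxx; lia.
have [_ [_ HC]] := adj_c U1.
by case: G1 => /(in_C_not_scal al_gt0 be_gt0 HC).
Qed.

Record spans (S : seq nat) (D : seq point) : Prop := Spans {
  spans_uniq : uniq D;
  spans_layers_uniq : uniq S;
  spans_adj : forall a b, (a, b) \in cycle_edges D -> adj al be (rcons n k) a b;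
  spans_mem : D =i [seq layer_pt t q | t <- S, q <- c];
  spans_range : forall t, t \in S -> (0 < t <= k)%N;
  spans_kept : forall t u v, t \in S -> cycle_adj c u v -> u \notin hinge ->
    cycle_adj D (layer_pt t u) (layer_pt t v) }.

Lemma spans_layer t : (0 < t <= k)%N -> spans [:: t] (layer t).
Proof.
move=> Ht; split => //.
- exact: uniq_layer.
- move=> a b; rewrite /layer cycle_edges_map => /mapP[[u v] uv [-> ->]].
  by apply: adj_layer => //; apply: adj_c; left.
- by move=> p; rewrite /= cats0.
- by move=> t'; rewrite inE => /eqP ->.
- by move=> t' u v; rewrite inE => /eqP -> uv _; apply: cycle_adj_map.
Qed.

(* X_t' Y_t and X'_t' Y'_t are edges of the bigger graph: their difference is
   +-g e_j in the old coordinates and +-h in the new one. *)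
Lemma stitch_layer S D t t' g h X X' Y Y' :
  spans S D -> t \notin S -> (0 < t <= k)%N -> t' \in S ->
  (g = al /\ h = be) \/ (g = be /\ h = al) -> `|t'%:Z - t%:Z| = h%:Z ->
  site_quad c (size n) g [:: X; X'; Y; Y'] -> {subset [:: X; X'; Y; Y'] <= hinge} ->
  cycle_adj D (layer_pt t' X) (layer_pt t' X') ->
  exists D', [/\ spans (t :: S) D',
    forall a b, cycle_adj D a b -> ~ same_pair a b (layer_pt t' X) (layer_pt t' X') ->
      cycle_adj D' a b &
    forall u v, cycle_adj c u v -> ~ same_pair u v Y Y' ->
      cycle_adj D' (layer_pt t u) (layer_pt t v)].
Proof.
move=> [uD uS adjD memD rangeD keptD] tS Ht t'S gh dtt' [XX' YY' [j Hj [GXY GX'Y']]] XYh DX.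
have neq u v t0 : cycle_adj c u v -> layer_pt t0 u != layer_pt t0 v.
  move=> /adj_c/(adj_neq al_gt0); apply: contra_neq => /layer_pt_inj[]//.
have cross P Q : P \in c -> Q \in c -> axial (size n) g j (vsub P Q) ->
    adj al be (rcons n k) (layer_pt t' P) (layer_pt t Q).
  by move=> /mem_c HP /mem_c HQ HPQ; apply: adj_cross gh HP HQ Hj HPQ (rangeD _ t'S) Ht dtt'.
have [Xc X'c] := cycle_adj_mem XX'; have [Yc Y'c] := cycle_adj_mem YY'.
have [D' [PD ED old new]] := merge_cycles DX (cycle_adj_map (layer_pt t) YY') (neq _ _ _ XX') (neq _ _ _ YY').
have new' u v : cycle_adj c u v -> ~ same_pair u v Y Y' -> cycle_adj D' (layer_pt t u) (layer_pt t v).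
  by move=> uv ns; apply: new; [exact: cycle_adj_map | move/same_pair_layer => [_]].
exists D'; split => //; split.
- rewrite (perm_uniq PD) cat_uniq uD uniq_layer andbT.
  apply/hasPn => _ /mapP[q _ ->]; rewrite memD.
  by apply/negP => /allpairsP[[t0 q0] /= [t0S _ /layer_pt_inj[E _]]]; rewrite E t0S in tS.
- by rewrite cons_uniq tS.
- move=> a b /ED[H|H|H|H].
  + exact: cycle_adj_adj adjD H.
  + exact: cycle_adj_adj (spans_adj (spans_layer Ht)) H.
  + by case: H => -[-> ->]; [|apply: adj_sym]; apply: cross.
  + by case: H => -[-> ->]; [|apply: adj_sym]; apply: cross.
- by move=> p; rewrite (perm_mem PD) mem_cat memD /= mem_cat orbC.
- by move=> t0; rewrite inE => /predU1P[->|/rangeD].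
move=> t0 u v; rewrite inE => /predU1P[->|t0S] uv uh.
  by apply: new' => //; apply: notin_same_pair uh _ _; apply: XYh; rewrite !inE eqxx ?orbT.
apply: old; first exact: keptD.
by move/same_pair_layer => [_]; apply: notin_same_pair uh _ _; apply: XYh; rewrite !inE eqxx ?orbT.
Qed.

(* The edge PB PB' of layer t is consumed only to attach layer t + al, and
   QA QA' only to attach layer t - be (for t <= be, t - be = 0 is never a layer). *)
Definition layered S D := [/\ spans S D,
  forall t, t \in S -> (t + al)%N \notin S -> cycle_adj D (layer_pt t PB) (layer_pt t PB') &
  forall t, t \in S -> (t - be)%N \notin S -> cycle_adj D (layer_pt t QA) (layer_pt t QA')].

Lemma layered_layer t : (0 < t <= k)%N -> layered [:: t] (layer t).
Proof.
move=> Ht; have [PP' _ _] := siteB; have [_ QQ' _] := siteA.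
by split; [exact: spans_layer | move=> t0 | move=> t0]; rewrite inE => /eqP-> _; apply: cycle_adj_map.
Qed.

Lemma layered_add S D t : layered S D -> t \in S -> (t + al <= k)%N -> (t + al)%N \notin S ->
  exists D', layered (t + al :: S) D'.
Proof.
move=> [sp openB openA] tS tk tnS; have [PP' _ _] := siteB; have [_ QQ' _] := siteA.
have Bh : {subset [:: PB; PB'; QB; QB'] <= hinge} by move=> p; rewrite mem_cat orbC => ->.
have range : (0 < t + al <= k)%N by rewrite addn_gt0 al_gt0 orbT tk.
have dist : `|t%:Z - (t + al)%:Z| = al%:Z by lia.
have [D' [sp' old new]] :=
  stitch_layer sp tnS range tS (or_intror (conj erefl erefl)) dist siteB Bh (openB t tS tnS).
exists D'; split => // t0; rewrite inE => /predU1P[->|t0S] H.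
- by apply: new PP' (site_quad_edges be_gt0 siteB).
- apply: old (openB t0 t0S _) _; first by apply: contra H; rewrite inE orbC => ->.
  by move/same_pair_layer => [Et _]; rewrite Et inE eqxx in H.
- by apply: new QQ' (apart_same_pair apartAB _ _ _); rewrite !inE eqxx ?orbT.
- apply: old (openA t0 t0S _) _; first by apply: contra H; rewrite inE orbC => ->.
  by move/same_pair_layer => [_]; apply: (apart_same_pair apartAB); rewrite !inE eqxx ?orbT.
Qed.

Lemma layered_sub S D t : layered S D -> t \in S -> (be < t)%N -> (t - be)%N \notin S ->
  exists D', layered ((t - be)%N :: S) D'.
Proof.
move=> [sp openB openA] tS bt tnS; have [PP' _ _] := siteB; have [AA' QQ' _] := siteA.
have Ah : {subset [:: QA; QA'; PA; PA'] <= hinge}.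
  by move=> p; rewrite /hinge mem_cat !inE => /or4P[]->; rewrite ?orbT.
have range : (0 < t - be <= k)%N.
  by have := spans_range sp tS; lia.
have dist : `|t%:Z - (t - be)%:Z| = be%:Z by lia.
have [D' [sp' old new]] :=
  stitch_layer sp tnS range tS (or_introl (conj erefl erefl)) dist (site_quadC siteA) Ah (openA t tS tnS).
exists D'; split => // t0; rewrite inE => /predU1P[->|t0S] H.
- by apply: new PP' (apart_same_pair (apart_sym apartAB) _ _ _); rewrite !inE eqxx ?orbT.
- apply: old (openB t0 t0S _) _; first by apply: contra H; rewrite inE orbC => ->.
  by move/same_pair_layer => [_]; apply: (apart_same_pair (apart_sym apartAB)); rewrite !inE eqxx ?orbT.
- by apply: new QQ' (site_quad_edges al_gt0 (site_quadC siteA)).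
- apply: old (openA t0 t0S _) _; first by apply: contra H; rewrite inE orbC => ->.
  by move/same_pair_layer => [Et _]; rewrite Et inE eqxx in H.
Qed.

Lemma spans_size S D : spans S D -> (size S <= k)%N.
Proof.
case=> _ uS _ _ rangeS _; rewrite -[k](size_iota 1); apply: uniq_leq_size => // t /rangeS.
by rewrite mem_iota; lia.
Qed.

Lemma layered_closed S D : layered S D ->
  exists S' D', [/\ layered S' D', {subset S <= S'},
    forall t, t \in S' -> (t + al <= k)%N -> (t + al)%N \in S' &
    forall t, t \in S' -> (be < t)%N -> (t - be)%N \in S'].
Proof.
have [m] := ubnP (k - size S); elim: m S D => // m IH S D Hm L.
have next t D' : layered (t :: S) D' -> exists S' D', [/\ layered S' D', {subset S <= S'},
    forall t, t \in S' -> (t + al <= k)%N -> (t + al)%N \in S' &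
    forall t, t \in S' -> (be < t)%N -> (t - be)%N \in S'].
  move=> L'; have [|S' [D'' [L'' sub addS subS]]] := IH (t :: S) D' _ L'.
    by case: L' => /spans_size /=; lia.
  by exists S', D''; split => // x xS; apply: sub; rewrite inE xS orbT.
case: (boolP (has (fun t => (t + al <= k)%N && ((t + al)%N \notin S)) S)).
  by case/hasP => t tS /andP[tk tnS]; have [D' /next] := layered_add L tS tk tnS.
move/hasPn => addS.
case: (boolP (has (fun t => (be < t)%N && ((t - be)%N \notin S)) S)).
  by case/hasP => t tS /andP[bt tnS]; have [D' /next] := layered_sub L tS bt tnS.
move/hasPn => subS; exists S, D; split => // t tS.
  by move=> tk; have := addS t tS; rewrite tk negbK.
by move=> bt; have := subS t tS; rewrite bt negbK.
Qed.

Lemma ham_spans S D : spans S D -> (forall t, (0 < t <= k)%N -> t \in S) ->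
  ham_cycle al be (rcons n k) D.
Proof.
move=> [uD _ adjD memD rangeS _] full.
have k1 : (0 < 1 <= k)%N by apply/andP; split => //; lia.
split => //.
- have [c3 _ _ _] := ham_c; apply: leq_trans c3 _; rewrite -(size_map (layer_pt 1)).
  apply: uniq_leq_size (uniq_layer 1) _.
  by move=> _ /mapP[q qc ->]; rewrite memD; apply/allpairsP; exists (1%N, q); rewrite full.
- move=> p; rewrite memD; split.
    by case/allpairsP => -[t q] /= [tS /mem_c qc ->]; apply: in_board_layer; rewrite ?rangeS.
  by case/in_board_rcons => t [q [Ht /mem_c qc ->]]; apply/allpairsP; exists (t, q); rewrite full.
- by move=> i Hi; apply: adjD; apply: pt_cycle_edge.
Qed.

Lemma site_quad_layer D t g X : site_quad c (size n) g X ->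
  (forall u v, cycle_adj c u v -> u \in X -> cycle_adj D (layer_pt t u) (layer_pt t v)) ->
  site_quad D (size (rcons n k)) g (map (layer_pt t) X).
Proof.
case: X => [|P [|P' [|Q [|Q' []]]]] //= [U1 U2 [j Hj [G1 G2]]] H.
have [[HP HP'] [HQ HQ']] := (cycle_adj_mem U1, cycle_adj_mem U2).
split; [apply: H U1 _|apply: H U2 _|]; rewrite ?inE ?eqxx ?orbT //.
rewrite size_rcons; exists j; first exact: ltnW.
by split; apply: axial_layer => //; apply: size_c.
Qed.

Lemma stacked_good_cycle X2 X4 :
  site_quad c (size n) al X2 -> site_quad c (size n) be X4 ->
  pairwise apart [:: [:: PA; PA'; QA; QA']; X2; [:: PB; PB'; QB; QB']; X4] ->
  exists2 D, ham_cycle al be (rcons n k) D & good_sites D (size (rcons n k)) al be.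
Proof.
move=> site2 site4 apartX; have /= /and4P[/and4P[A2 _ A4 _] /and3P[B2 A24 _] /andP[B4 _] _] := apartX.
case: (ltnP 1 k) => [k2|k1].
  have [|S [D [[sp _ _] alS addS subS]]] := @layered_closed [:: al] _ (layered_layer _).
    by apply/andP; split => //; lia.
  have full := add_sub_closed_all al_gt0 be_gt0 co_al_be (P := fun t => t \in S) k_ge
    (alS _ (mem_head _ _)) addS subS.
  have lift t g X : (0 < t <= k)%N -> site_quad c (size n) g X ->
      apart [:: PA; PA'; QA; QA'] X -> apart X [:: PB; PB'; QB; QB'] ->
      site_quad D (size (rcons n k)) g (map (layer_pt t) X).
    move=> Ht sX AX XB; apply: site_quad_layer sX _ => u v uv uX.
    apply: (spans_kept sp (full _ Ht) uv).
    by rewrite /hinge mem_cat negb_or (apart_notin (apart_sym AX) uX) (apart_notin XB uX).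
  exists D; first exact: ham_spans sp full.
  exists (map (layer_pt 1) X2), (map (layer_pt 2) X2), (map (layer_pt 1) X4), (map (layer_pt 2) X4).
  have [k1 k2'] : (0 < 1 <= k)%N /\ (0 < 2 <= k)%N by rewrite k2 (ltnW k2).
  split; try by apply: lift => //; apply: apart_sym.
  by rewrite /= ?andbT; do !(apply/andP; split); apply: apart_layer; rewrite ?A24 ?orbT.
have Ht : (0 < 1 <= k)%N by apply/andP; split => //; lia.
exists (layer 1); first by apply: ham_spans (spans_layer Ht) _ => t; rewrite inE; lia.
have lift g X : site_quad c (size n) g X -> site_quad (layer 1) (size (rcons n k)) g (map (layer_pt 1) X).
  by move=> sX; apply: site_quad_layer sX _ => u v uv _; apply: cycle_adj_map.
exists (map (layer_pt 1) [:: PA; PA'; QA; QA']), (map (layer_pt 1) X2).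
exists (map (layer_pt 1) [:: PB; PB'; QB; QB']), (map (layer_pt 1) X4).
split; try exact: lift.
rewrite -[[:: _; _; _; _]]/(map (map (layer_pt 1)) [:: _; X2; _; X4]) pairwise_map.
by apply: sub_pairwise apartX => X Y XY; apply: apart_layer; rewrite XY orbT.
Qed.

End Stacking.

Theorem proposition5p4 (alpha beta : nat) (n : seq nat) (k : nat) :
  (0 < alpha)%N -> (0 < beta)%N -> all (fun x => (0 < x)%N) n ->
  has_good_cycle alpha beta n ->
  (alpha + beta - 1 <= k)%N ->
  has_good_cycle alpha beta (rcons n k).
Proof.
move=> al0 be0 npos /good_cycleP[c ham [X1 [X2 [X3 [X4 [S1 S2 S3 S4 apartX]]]]]] k_ge.
have co := coprime_of_ham npos ham.
case: X1 S1 apartX => [|PA [|PA' [|QA [|QA' []]]]] // S1 apartX.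
case: X3 S3 apartX => [|PB [|PB' [|QB [|QB' []]]]] // S3 apartX.
have /= /andP[/and4P[_ AB _ _] _] := apartX.
by apply/good_cycleP; apply: (stacked_good_cycle al0 be0 co k_ge ham S1 S3 AB S2 S4 apartX).
Qed.
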